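(* For every positive integer $n$, $$\sum_{j=1}^{n}\csc^6\left(\frac{\pi j}{2n+1}\right) = \frac{8(n+1)n(8n^4+16n^3+35n^2+27n+54)}{945}.$$ *)

From Stdlib Require Import Reals.
Open Scope R_scope.

Definition csc (x : R) : R := / sin x.

(* Let m = 2n + 1 and t_j = tan^2 (j pi / m) for 1 <= j <= n.  By de Moivre,
   sin (m x) = cos^m x * tan x * V (tan^2 x) with V y = sum_j (-1)^j C(m, 2j+1) y^j,
   a polynomial of degree n vanishing at the n distinct t_j; hence
   V y = m * prod_j (1 - y / t_j).  Reading off the coefficients of y, y^2, y^3 and
   applying Newton's identities yields the power sums p_1, p_2, p_3 of the
   cot^2 (j pi / m) = 1 / t_j, and csc^6 = (1 + cot^2)^3 turns the sum into
   n + 3 p_1 + 3 p_2 + p_3. *)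

From Stdlib Require Import Reals Lra Lia.
From mathcomp Require all_boot all_order all_algebra Rstruct ring lra zify.
Open Scope R_scope.

Definition angle (m j : nat) : R := PI * INR j / INR m.

Lemma angle_in_first_quadrant (m j : nat) :
  (0 < j)%nat -> (2 * j < m)%nat -> 0 < angle m j < PI / 2.
Proof.
intros hj hjm; unfold angle.
assert (hm : 0 < INR m) by (apply lt_0_INR; lia).
assert (hj' : 0 < INR j) by (apply lt_0_INR; lia).
assert (h2j : 2 * INR j < INR m).
{ replace (2 * INR j) with (INR (2 * j)) by (rewrite mult_INR; simpl; ring).
  apply lt_INR; lia. }
pose proof PI_RGT_0 as hpi.
split.
- apply Rdiv_lt_0_compat; [apply Rmult_lt_0_compat|]; assumption.
- apply (Rmult_lt_reg_r (2 * INR m)); [lra|].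
  replace (PI * INR j / INR m * (2 * INR m)) with (PI * (2 * INR j)) by (field; lra).
  replace (PI / 2 * (2 * INR m)) with (PI * INR m) by field.
  apply Rmult_lt_compat_l; assumption.
Qed.

Lemma angle_lt (m j k : nat) : (0 < m)%nat -> (j < k)%nat -> angle m j < angle m k.
Proof.
intros hm hjk; unfold angle.
apply Rmult_lt_compat_r; [apply Rinv_0_lt_compat, lt_0_INR; lia|].
apply Rmult_lt_compat_l; [exact PI_RGT_0 | apply lt_INR; lia].
Qed.

Lemma sin_angle_mul (m j : nat) : (0 < m)%nat -> sin (INR m * angle m j) = 0.
Proof.
intros hm; unfold angle; apply sin_eq_0_1; exists (Z.of_nat j).
rewrite <- INR_IZR_INZ; field; apply not_0_INR; lia.
Qed.

Lemma angle_trig_gt0 (m j : nat) : (0 < j)%nat -> (2 * j < m)%nat ->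
  0 < sin (angle m j) /\ 0 < cos (angle m j) /\ 0 < tan (angle m j).
Proof.
intros hj hjm; destruct (angle_in_first_quadrant m j hj hjm) as [h0 h1].
pose proof PI_RGT_0.
assert (hs : 0 < sin (angle m j)) by (apply sin_gt_0; lra).
assert (hc : 0 < cos (angle m j)) by (apply cos_gt_0; lra).
repeat split; try assumption; apply Rdiv_lt_0_compat; assumption.
Qed.

Lemma tan_angle_lt (m j k : nat) :
  (0 < j)%nat -> (j < k)%nat -> (2 * k < m)%nat -> tan (angle m j) < tan (angle m k).
Proof.
intros hj hjk hkm.
destruct (angle_in_first_quadrant m j hj ltac:(lia)) as [hj0 _].
destruct (angle_in_first_quadrant m k ltac:(lia) hkm) as [_ hk1].
pose proof PI_RGT_0.
apply tan_increasing; [lra | apply angle_lt; lia | lra].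
Qed.

Section CscSixthPowerSum.
Set Implicit Arguments.
Unset Strict Implicit.
Import all_boot all_order all_algebra Rstruct ring lra zify.
Import Order.TTheory GRing.Theory Num.Theory.
Local Open Scope ring_scope.

Section ProdOneSubZX.
Variable R : comNzRingType.

Definition power_sum (k : nat) (s : seq R) : R := \sum_(a <- s) a ^+ k.

Lemma coef_prod_1subZX (s : seq R) :
  let P := \prod_(a <- s) (1 - a *: 'X) in
  let p1 := power_sum 1 s in let p2 := power_sum 2 s in let p3 := power_sum 3 s in
  [/\ P`_0 = 1, P`_1 = - p1, 2 * P`_2 = p1 ^+ 2 - p2
    & 6 * P`_3 = - (p1 ^+ 3 - 3 * p1 * p2 + 2 * p3)].
Proof.
elim: s => [|a s [c0 c1 c2 c3]] /=.
  by rewrite /power_sum !big_nil !coef1 /=; split; ring.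
rewrite /power_sum !big_cons -!/(power_sum _ s).
rewrite mulrBl mul1r -scalerAl !(coefB, coefZ, coefXM) /=.
split.
- by rewrite c0 mulr0 subr0.
- by rewrite c1 c0; ring.
- by rewrite mulrBr c2 c1; ring.
- set P := \prod_(b <- s) _ in c2 *.
  have -> : 6 * (P`_3 - a * P`_2) = 6 * P`_3 - 3 * a * (2 * P`_2) by ring.
  by rewrite c3 c2; ring.
Qed.

Lemma size_prod_1subZX (s : seq R) :
  (size (\prod_(a <- s) (1 - a *: 'X))%R <= (size s).+1)%N.
Proof.
elim: s => [|a s IH]; first by rewrite big_nil size_poly1.
rewrite big_cons; apply: leq_trans (size_polyMleq _ _) _.
have size_factor : (size (1 - a *: 'X : {poly R})%R <= 2)%N.
  apply: leq_trans (size_polyD _ _) _; rewrite size_poly1 size_polyN geq_max /=.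
  by apply: leq_trans (size_scale_leq _ _) _; rewrite size_polyX.
by rewrite -subn1 leq_subLR add1n; exact: (leq_add size_factor IH).
Qed.

Lemma sum_cube_1D (s : seq R) :
  \sum_(a <- s) (1 + a) ^+ 3
  = (size s)%:R + 3 * power_sum 1 s + 3 * power_sum 2 s + power_sum 3 s.
Proof.
elim: s => [|a s IH]; first by rewrite /power_sum !big_nil /=; ring.
by rewrite /power_sum !big_cons -!/(power_sum _ s) IH /= -addn1 natrD; ring.
Qed.

End ProdOneSubZX.

Lemma poly_eq_prod_1subZX (F : fieldType) (s : seq F) (p : {poly F}) :
  uniq s -> 0 \notin s -> (size p <= (size s).+1)%N -> {in s, forall a, root p a^-1} ->
  p = p.[0] *: \prod_(a <- s) (1 - a *: 'X).
Proof.
move=> s_uniq s_nz p_size p_root; apply/eqP; rewrite -subr_eq0; apply/eqP.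
apply: (@roots_geq_poly_eq0 _ _ (0 :: map GRing.inv s)).
- apply/allP => _ /predU1P [-> | /mapP [a as_ ->]].
    rewrite rootE !hornerE horner_prod big1 ?mulr1 ?subrr // => b _.
    by rewrite !hornerE subr0.
  have a_nz : a != 0 by apply: contraNneq s_nz => <-.
  have prod_a : \prod_(b <- s) (1 - b *: 'X).[a^-1] = 0.
    apply/eqP; rewrite prodf_seq_eq0; apply/hasP; exists a => //.
    by rewrite !hornerE mulfV ?subrr.
  by rewrite rootE !hornerE horner_prod prod_a mulr0 subr0 -rootE p_root.
- rewrite /= map_inj_uniq ?s_uniq ?andbT; last exact: invr_inj.
  apply/mapP => -[a as_ inv_a0].
  by move: as_; rewrite -[a]invrK -inv_a0 invr0 (negbTE s_nz).
- rewrite /= size_map; apply: leq_trans (size_polyD _ _) _.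
  by rewrite size_polyN geq_max p_size (leq_trans (size_scale_leq _ _)) ?size_prod_1subZX.
Qed.

Lemma natr_binSS (R : pzSemiRingType) (m k : nat) :
  'C(m.+2, k.+2)%:R = 'C(m, k)%:R + 2 * 'C(m, k.+1)%:R + 'C(m, k.+2)%:R :> R.
Proof.
have -> : 'C(m.+2, k.+2) = 'C(m, k) + 2 * 'C(m, k.+1) + 'C(m, k.+2) by rewrite !binS; lia.
by rewrite 2!natrD natrM.
Qed.

Lemma natr_bin_fact (R : comPzRingType) (m k : nat) :
  'C(m, k)%:R * k`!%:R = \prod_(i < k) (m%:R - i%:R) :> R.
Proof.
rewrite -natrM bin_ffact; have [km | mk] := leqP k m.
  rewrite ffact_prod natr_prod; apply: eq_bigr => i _.
  by rewrite natrB // ltnW // (leq_trans (ltn_ord i)).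
by rewrite ffact_small // (bigD1 (Ordinal mk)) //= subrr mul0r.
Qed.

Section MultipleAnglePolynomials.
Variable R : comNzRingType.

Definition cos_mul_poly (n : nat) : {poly R} :=
  \poly_(j < n.+1) ((-1) ^+ j * 'C((2 * n).+1, 2 * j)%:R).
Definition sin_mul_poly (n : nat) : {poly R} :=
  \poly_(j < n.+1) ((-1) ^+ j * 'C((2 * n).+1, (2 * j).+1)%:R).

Lemma coef_cos_mul_poly n j : (cos_mul_poly n)`_j = (-1) ^+ j * 'C((2 * n).+1, 2 * j)%:R.
Proof. by rewrite coef_poly; case: ltnP => // jn; rewrite bin_small ?mulr0 //; lia. Qed.

Lemma coef_sin_mul_poly n j :
  (sin_mul_poly n)`_j = (-1) ^+ j * 'C((2 * n).+1, (2 * j).+1)%:R.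
Proof. by rewrite coef_poly; case: ltnP => // jn; rewrite bin_small ?mulr0 //; lia. Qed.

Lemma cos_mul_poly0 : cos_mul_poly 0 = 1.
Proof.
apply/polyP => -[|j]; rewrite coef_cos_mul_poly coef1 /=.
  by rewrite mul1r.
by rewrite bin_small ?mulr0 //; lia.
Qed.

Lemma sin_mul_poly0 : sin_mul_poly 0 = 1.
Proof.
apply/polyP => -[|j]; rewrite coef_sin_mul_poly coef1 /=.
  by rewrite mul1r.
by rewrite bin_small ?mulr0 //; lia.
Qed.

Lemma cos_mul_polyS n :
  cos_mul_poly n.+1 = cos_mul_poly n - cos_mul_poly n * 'X - (sin_mul_poly n * 'X) *+ 2.
Proof.
apply/polyP => -[|j];
  rewrite !(coefB, coefMn, coefMX) /= !coef_cos_mul_poly ?coef_sin_mul_poly.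
  by rewrite !bin0 subr0 mul0rn subr0.
have -> : (2 * n.+1 = (2 * n).+2)%N by lia.
have -> : (2 * j.+1 = (2 * j).+2)%N by lia.
by rewrite natr_binSS exprS; ring.
Qed.

Lemma sin_mul_polyS n :
  sin_mul_poly n.+1 = cos_mul_poly n *+ 2 + sin_mul_poly n - sin_mul_poly n * 'X.
Proof.
apply/polyP => -[|j];
  rewrite !(coefB, coefD, coefMn, coefMX) /= !coef_sin_mul_poly ?coef_cos_mul_poly.
  rewrite !bin0 !bin1 subr0 ?mul1r (_ : (2 * n.+1).+1 = 2 + (2 * n).+1)%N ?natrD //; lia.
have -> : (2 * n.+1 = (2 * n).+2)%N by lia.
have -> : (2 * j.+1 = (2 * j).+2)%N by lia.
by rewrite natr_binSS exprS; ring.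
Qed.

End MultipleAnglePolynomials.

Lemma cos_sin_mul_odd (n : nat) (x : R) : cos x != 0 ->
  cos (x *+ (2 * n).+1) = cos x ^+ (2 * n).+1 * (cos_mul_poly R n).[tan x ^+ 2] /\
  sin (x *+ (2 * n).+1) = cos x ^+ (2 * n).+1 * tan x * (sin_mul_poly R n).[tan x ^+ 2].
Proof.
move=> cx_nz; have sin_tan : sin x = tan x * cos x by rewrite /tan divfK.
elim: n => [|n [IHc IHs]].
  by rewrite cos_mul_poly0 sin_mul_poly0 !hornerC muln0 expr1 !mulr1 sin_tan mulrC.
have -> : (2 * n.+1).+1 = (2 * n).+1 + 2 by lia.
rewrite mulrnDr sinD cosD IHc IHs !sinD !cosD sin_tan cos_mul_polyS sin_mul_polyS.
by rewrite !(exprD, hornerD, hornerN, hornerMn, hornerMX); split; ring.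
Qed.

Lemma csc6_cot2 (x : R) : sin x != 0 -> cos x != 0 ->
  csc x ^+ 6 = (1 + (tan x ^+ 2)^-1) ^+ 3.
Proof.
move=> sx_nz cx_nz; have pythagoras : sin x ^+ 2 + cos x ^+ 2 = 1 := sin2_cos2 x.
have -> : 1 + (tan x ^+ 2)^-1 = (sin x ^+ 2 + cos x ^+ 2) / sin x ^+ 2.
  by rewrite /tan RdivE; field; rewrite sx_nz cx_nz.
by rewrite pythagoras div1r /csc -exprVn -exprM.
Qed.

Lemma csc6_sum_identity (n : nat) (p1 p2 p3 : R) : let m := (2 * n).+1 in
  m%:R * p1 = 'C(m, 3)%:R ->
  m%:R * (p1 ^+ 2 - p2) = 2 * 'C(m, 5)%:R ->
  m%:R * (p1 ^+ 3 - 3 * p1 * p2 + 2 * p3) = 6 * 'C(m, 7)%:R ->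
  n%:R + 3 * p1 + 3 * p2 + p3
  = 8 * (n%:R + 1) * n%:R
      * (8 * n%:R ^+ 4 + 16 * n%:R ^+ 3 + 35 * n%:R ^+ 2 + 27 * n%:R + 54) / 945.
Proof.
move=> m e1 e2 e3.
have m_nz : m%:R != 0 :> R by rewrite pnatr_eq0.
have binE k : 'C(m, k)%:R = \prod_(i < k) (m%:R - i%:R) / k`!%:R :> R.
  by rewrite -natr_bin_fact mulfK // pnatr_eq0 -lt0n fact_gt0.
have mE : m%:R = 2 * n%:R + 1 :> R by rewrite /m -addn1 natrD natrM.
have x_nz : 2 * n%:R + 1 != 0 :> R by rewrite -mE.
rewrite !binE !big_ord_recr big_ord0 /= mE !factS fact0 in e1 e2 e3.
move/(canRL (mulKf x_nz)): e1 => p1E.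
move/(canRL (mulKf x_nz)): e2 => e2; move/(canRL (mulKf x_nz)): e3 => e3.
rewrite (_ : p3 = ((p1 ^+ 3 - 3 * p1 * p2 + 2 * p3) - p1 ^+ 3 + 3 * p1 * p2) / 2);
  last by field.
rewrite e3 (_ : p2 = p1 ^+ 2 - (p1 ^+ 2 - p2)); last by ring.
by rewrite e2 p1E; field.
Qed.

Section CotangentSquares.
Variable n : nat.
Let m := (2 * n).+1.

Lemma angle_trig_neq0 k : k \in iota 0 n ->
  [/\ sin (angle m k.+1) != 0, cos (angle m k.+1) != 0 & 0 < tan (angle m k.+1)].
Proof.
rewrite mem_iota add0n => /andP[_ kn].
have [/RltP s_pos [/RltP c_pos /RltP t_pos]] :=
  angle_trig_gt0 m k.+1 ltac:(lia) ltac:(rewrite /m; lia).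
by rewrite !gt_eqF.
Qed.

Definition cot2 : seq R := [seq (tan (angle m k.+1) ^+ 2)^-1 | k <- iota 0 n].

Lemma size_cot2 : size cot2 = n.
Proof. by rewrite size_map size_iota. Qed.

Lemma cot2_neq0 : 0 \notin cot2.
Proof.
apply/mapP => -[k kn /esym/eqP]; have [_ _ t_pos] := angle_trig_neq0 kn.
by rewrite invr_eq0 expf_eq0 gt_eqF.
Qed.

Lemma uniq_cot2 : uniq cot2.
Proof.
rewrite map_inj_in_uniq ?iota_uniq // => j k jn kn /invr_inj.
wlog jk : j k jn kn / (j < k)%N.
  move=> wlog_jk; case: (ltngtP j k) => [|kj|//]; first exact: wlog_jk.
  by move/esym/(wlog_jk k j kn jn kj).
have [_ _ tj_pos] := angle_trig_neq0 jn.
have /RltP tan_jk := tan_angle_lt m j.+1 k.+1 ltac:(lia) ltac:(lia)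
  ltac:(rewrite /m; move: kn; rewrite mem_iota; lia).
by move=> e; move: (ltrXn2r 2 (ltW tj_pos) tan_jk); rewrite e ltxx.
Qed.

Lemma sin_mul_poly_root k :
  k \in iota 0 n -> root (sin_mul_poly R n) (tan (angle m k.+1) ^+ 2).
Proof.
move=> kn; have [_ c_nz t_pos] := angle_trig_neq0 kn.
have [_ sin_m] := cos_sin_mul_odd n c_nz.
have := sin_angle_mul m k.+1 ltac:(lia); rewrite RmultE INRE mulr_natl sin_m.
rewrite rootE => /eqP; rewrite mulf_eq0 => /orP[|//].
by rewrite mulf_eq0 expf_eq0 (negbTE c_nz) (gt_eqF t_pos) andbF.
Qed.

Lemma sin_mul_poly_factor : sin_mul_poly R n = m%:R *: \prod_(a <- cot2) (1 - a *: 'X).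
Proof.
rewrite {1}(poly_eq_prod_1subZX (p := sin_mul_poly R n) uniq_cot2 cot2_neq0).
- by rewrite horner_coef0 coef_sin_mul_poly mul1r bin1.
- by rewrite size_cot2 size_poly.
by move=> _ /mapP [k kn ->]; rewrite invrK sin_mul_poly_root.
Qed.

Lemma cot2_power_sums :
  let p1 := power_sum 1 cot2 in let p2 := power_sum 2 cot2 in let p3 := power_sum 3 cot2 in
  [/\ m%:R * p1 = 'C(m, 3)%:R, m%:R * (p1 ^+ 2 - p2) = 2 * 'C(m, 5)%:R
    & m%:R * (p1 ^+ 3 - 3 * p1 * p2 + 2 * p3) = 6 * 'C(m, 7)%:R].
Proof.
have [_ P1 P2 P3] := coef_prod_1subZX cot2; set P := \prod_(a <- cot2) _ in P1 P2 P3 *.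
have coefE k : (-1) ^+ k * 'C(m, (2 * k).+1)%:R = m%:R * P`_k.
  by rewrite -coef_sin_mul_poly {1}sin_mul_poly_factor coefZ.
split.
- by have := coefE 1; rewrite P1; lra.
- by rewrite -P2 mulrCA -(coefE 2); ring.
- by rewrite -[_ + _]opprK -P3 mulrN mulrCA -(coefE 3); ring.
Qed.

Lemma sum_csc6 :
  \sum_(0 <= k < n) csc (angle m k.+1) ^+ 6
  = 8 * (n%:R + 1) * n%:R
      * (8 * n%:R ^+ 4 + 16 * n%:R ^+ 3 + 35 * n%:R ^+ 2 + 27 * n%:R + 54) / 945.
Proof.
have [e1 e2 e3] := cot2_power_sums.
rewrite -(csc6_sum_identity e1 e2 e3); have := sum_cube_1D cot2; rewrite size_cot2 => <-.
rewrite big_map /index_iota subn0.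
by apply: eq_big_seq => k kn; have [s_nz c_nz _] := angle_trig_neq0 kn; exact: csc6_cot2.
Qed.

End CotangentSquares.

Local Close Scope ring_scope.

(* Stated in the notation of the theorem.  [sum_f 1 n f] is
   [sum_f_R0 (fun k => f (k + 1)) (n - 1)], which is [f 1] rather than [0] when
   [n = 0]; hence the hypothesis. *)
Lemma sum_f_csc6 (n : nat) : (0 < n)%nat ->
  sum_f 1 n (fun j => csc (PI * INR j / INR (2 * n + 1)) ^ 6)
  = 8 * (INR n + 1) * INR n
      * (8 * INR n ^ 4 + 16 * INR n ^ 3 + 35 * INR n ^ 2 + 27 * INR n + 54) / 945.
Proof.
move=> n_gt0; rewrite /sum_f sum_f_R0E (_ : (n - 1).+1 = n); last by lia.
under eq_bigr => k _ do rewrite RpowE Nat.add_1_r addn1.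
etransitivity; first exact: sum_csc6 n.
by rewrite !RealsE.
Qed.

End CscSixthPowerSum.

Theorem mainTheorem13 (n : nat) (hn : (1 <= n)%nat) :
  sum_f 1 n (fun j => (csc (PI * INR j / INR (2 * n + 1))) ^ 6)
  = 8 * (INR n + 1) * INR n
      * (8 * INR n ^ 4 + 16 * INR n ^ 3 + 35 * INR n ^ 2 + 27 * INR n + 54) / 945.
Proof. exact (sum_f_csc6 (ssrbool.introT ssrnat.ltP hn)). Qed.
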